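(* Fix $0<s_{\min}<s_{\max}$ and $\epsilon>0$ small, and let $\alpha=R/(R+d)$. There is $T_*>0$ such that for every $\tilde T\ge T_*$ and every pair of points $r,r'$ on the left arc $\partial\Gamma_L$ of $\partial\Gamma$ (or both on the right arc $\partial\Gamma_R$), there exists a path of a single particle from $r$ to $r'$ consisting of free flights between successive collisions with $\partial\Gamma$ (possibly with specular reflections off $L_u\cup L_d$), with all outgoing speeds $s$ and angles $\varphi$ at $\partial\Gamma$ satisfying $s_{\min}\le s\le s_{\max}$ and $\alpha+\epsilon\le|\sin\varphi|\le1-\epsilon$, which takes precisely time $\tilde T$ to complete. Moreover, these paths can be chosen so that the number of collisions is bounded by a monotone function of $\tilde T$.
   Context: $\Gamma$ is a closed disk of radius $R+d$ with a concentric disk $D$ of radius $R$; vertical segments $L_u,L_d$ above and below $D$ split $\Gamma\setminus D$ into a left and a right half, and a particle is confined to one half, moving in straight lines with constant speed and reflecting specularly off $L_u\cup L_d$. $\varphi$ is the angle of the outgoing velocity with the normal to $\partial\Gamma$ at the emission point; a chord leaving $\partial\Gamma$ with $|\sin\varphi|>\alpha$ does not meet $D$. *)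

(* concrete reals R, points of the plane as R * R.
   The disk Gamma has radius Rad + d centred at the origin, D has radius Rad,
   L_u = {0} x [Rad, Rad+d], L_d = {0} x [-(Rad+d), -Rad]. *)
From Stdlib Require Import Reals Lra.
Open Scope R_scope.

Definition pt := (R * R)%type.
Definition padd (p q : pt) : pt := (fst p + fst q, snd p + snd q).
Definition pscal (a : R) (p : pt) : pt := (a * fst p, a * snd p).
Definition nrm (p : pt) : R := sqrt (fst p ^ 2 + snd p ^ 2).

Definition refl (v : pt) : pt := (- fst v, snd v).

Definition in_half (left : bool) (z : pt) : Prop :=
  if left then fst z <= 0 else 0 <= fst z.

Definition on_arc (left : bool) (Rad d : R) (z : pt) : Prop :=
  nrm z = Rad + d /\ in_half left z.

Definition in_dom (left : bool) (Rad d : R) (z : pt) : Prop :=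
  in_half left z /\ Rad < nrm z /\ nrm z < Rad + d.

Definition toward_wall (left : bool) (v : pt) : Prop :=
  if left then 0 < fst v else fst v < 0.

(* A free flight emitted at p with velocity v, lasting time tau and ending at q:
   either a straight segment, or a straight segment hitting L_u \cup L_d at m,
   specularly reflected there, then a straight segment; all intermediate
   points stay in the particle's half of Gamma \ D and do not touch dGamma. *)
Definition flight (left : bool) (Rad d : R) (p v : pt) (tau : R) (q : pt) : Prop :=
  0 < tau /\
  ( (q = padd p (pscal tau v) /\
       forall s, 0 < s < tau -> in_dom left Rad d (padd p (pscal s v)))
  \/ exists t1, 0 < t1 < tau /\ toward_wall left v /\
       let m := padd p (pscal t1 v) in
       fst m = 0 /\
       (forall s, 0 < s <= t1 -> in_dom left Rad d (padd p (pscal s v))) /\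
       q = padd m (pscal (tau - t1) (refl v)) /\
       (forall s, 0 < s < tau - t1 -> in_dom left Rad d (padd m (pscal s (refl v))))).

(* |sin phi|, phi the angle between the outgoing velocity v at p and the
   (inward) normal to dGamma at p *)
Definition abs_sin_phi (p v : pt) : R :=
  Rabs (fst p * snd v - snd p * fst v) / (nrm p * nrm v).

Fixpoint total_time (tau : nat -> R) (n : nat) : R :=
  match n with O => 0 | S k => total_time tau k + tau k end.

(* A path of n free flights from r to r' on the given side, of total time T,
   with collision points P 0 = r, ..., P n = r', outgoing velocities V i and
   flight durations tau i, satisfying the speed and angle constraints. *)
Definition good_path (left : bool) (Rad d smin smax alpha eps : R)
    (r r' : pt) (T : R) (n : nat) (P : nat -> pt) (V : nat -> pt) (tau : nat -> R) : Prop :=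
  P O = r /\ P n = r' /\
  (forall i, (i <= n)%nat -> on_arc left Rad d (P i)) /\
  (forall i, (i < n)%nat ->
     flight left Rad d (P i) (V i) (tau i) (P (S i)) /\
     smin <= nrm (V i) <= smax /\
     alpha + eps <= abs_sin_phi (P i) (V i) <= 1 - eps) /\
  total_time tau n = T.

(* For points of the circle of radius rho = R + d at
   polar angles a and b, the chord between them makes with the normal an angle phi with
   |sin phi| = cos ((b - a) / 2), and the chord misses D exactly when |sin phi| > alpha.
   Hence every chord spanning an angle in a fixed window [h/8, h], h small, is a legal
   flight meeting the angle constraints.  Two points of a half-arc are joined by at most
   ceil (PI / h) + 2 such chords; appending back-and-forth bounces along one chord of length
   c raises the total length L by steps of 2c until s_min T <= L <= s_max T, which is
   possible as soon as T is large, and the path is then run at constant speed L / T. *)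

From Stdlib Require Import Reals Lra Lia ZArith.
Open Scope R_scope.

Definition cross (p v : pt) : R := fst p * snd v - snd p * fst v.
Definition psub (q p : pt) : pt := (fst q - fst p, snd q - snd p).

Lemma nrm_sq z : nrm z ^ 2 = fst z ^ 2 + snd z ^ 2.
Proof. unfold nrm. apply pow2_sqrt. nra. Qed.

Lemma nrm_ge0 z : 0 <= nrm z.
Proof. apply sqrt_pos. Qed.

Lemma nrm_pscal k z : 0 <= k -> nrm (pscal k z) = k * nrm z.
Proof.
  intros Hk. unfold nrm, pscal; cbn [fst snd].
  replace ((k * fst z) ^ 2 + (k * snd z) ^ 2) with (k ^ 2 * (fst z ^ 2 + snd z ^ 2)) by ring.
  rewrite sqrt_mult_alt by nra. rewrite sqrt_pow2 by lra. reflexivity.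
Qed.

Lemma abs_cross_le z v : Rabs (cross z v) <= nrm z * nrm v.
Proof.
  pose proof (nrm_sq z) as Ez. pose proof (nrm_sq v) as Ev.
  pose proof (nrm_ge0 z). pose proof (nrm_ge0 v).
  assert (Hlag : (nrm z * nrm v) ^ 2 =
                 cross z v ^ 2 + (fst z * fst v + snd z * snd v) ^ 2).
  { rewrite Rpow_mult_distr, Ez, Ev. unfold cross. ring. }
  rewrite <- (pow2_abs (cross z v)) in Hlag.
  pose proof (Rabs_pos (cross z v)). pose proof (pow2_ge_0 (fst z * fst v + snd z * snd v)).
  destruct (Rle_or_lt (Rabs (cross z v)) (nrm z * nrm v)) as [|Hlt]; [assumption|].
  assert (0 <= nrm z * nrm v) by (apply Rmult_le_pos; assumption).
  assert ((nrm z * nrm v) ^ 2 < Rabs (cross z v) ^ 2) by nra.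
  lra.
Qed.

Lemma abs_sin_phi_pscal p v k : 0 < k -> abs_sin_phi p (pscal k v) = abs_sin_phi p v.
Proof.
  intros Hk. unfold abs_sin_phi. rewrite nrm_pscal by lra. cbn [pscal fst snd].
  replace (fst p * (k * snd v) - snd p * (k * fst v))
    with (k * (fst p * snd v - snd p * fst v)) by ring.
  rewrite Rabs_mult, (Rabs_pos_eq k) by lra.
  replace (nrm p * (k * nrm v)) with (k * (nrm p * nrm v)) by ring.
  apply Rdiv_mult_l_l. lra.
Qed.

Lemma segment_outside_disk Rad p v s :
  Rad * nrm v < Rabs (cross p v) -> Rad < nrm (padd p (pscal s v)).
Proof.
  intros H.
  assert (E : cross (padd p (pscal s v)) v = cross p v) by (unfold cross, padd, pscal; simpl; ring).
  pose proof (abs_cross_le (padd p (pscal s v)) v) as Hle. rewrite E in Hle.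
  pose proof (nrm_ge0 v). nra.
Qed.

(* The squared distance to the centre along the chord is c^2 - s (tau - s) |v|^2. *)
Lemma segment_inside_circle c p v tau s :
  nrm p = c -> nrm (padd p (pscal tau v)) = c -> 0 < nrm v -> 0 < s < tau ->
  nrm (padd p (pscal s v)) < c.
Proof.
  intros Hp Hq Hv Hs.
  pose proof (nrm_sq p) as Ep. pose proof (nrm_sq v) as Ev.
  pose proof (nrm_sq (padd p (pscal tau v))) as Eq.
  pose proof (nrm_sq (padd p (pscal s v))) as Es.
  pose proof (nrm_ge0 (padd p (pscal s v))).
  rewrite Hp in Ep. rewrite Hq in Eq. cbn [padd pscal fst snd] in Eq, Es.
  assert (Hdot : 2 * (fst p * fst v + snd p * snd v) = - tau * nrm v ^ 2).
  { apply Rmult_eq_reg_l with tau; [|lra]. rewrite Ev. nra. }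
  assert (Hz : nrm (padd p (pscal s v)) ^ 2 = c ^ 2 - s * (tau - s) * nrm v ^ 2).
  { rewrite Es, Ev in *. nra. }
  assert (0 < s * (tau - s) * nrm v ^ 2) by (apply Rmult_lt_0_compat; [nra|apply pow_lt; lra]).
  assert (0 <= c) by (rewrite <- Hp; apply nrm_ge0).
  nra.
Qed.

Lemma in_half_segment left p v tau s :
  in_half left p -> in_half left (padd p (pscal tau v)) -> 0 <= s <= tau ->
  in_half left (padd p (pscal s v)).
Proof.
  unfold in_half; cbn [padd pscal fst snd]; intros Hp Hq Hs.
  assert (E : tau * (fst p + s * fst v) = (tau - s) * fst p + s * (fst p + tau * fst v)) by ring.
  destruct (Req_dec tau 0) as [->|Htau].
  - replace s with 0 by lra. rewrite Rmult_0_l, Rplus_0_r in *. exact Hp.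
  - destruct left; [apply Rmult_le_reg_l with tau|apply Rmult_le_reg_l with tau]; nra.
Qed.

Lemma transversal_of_abs_sin_phi Rad d p v :
  0 < Rad -> 0 < d -> nrm p = Rad + d -> Rad / (Rad + d) < abs_sin_phi p v ->
  0 < nrm v /\ Rad * nrm v < Rabs (cross p v).
Proof.
  intros HR Hd Hp H. unfold abs_sin_phi in H. rewrite Hp in H. fold (cross p v) in H.
  (* For v = 0 the angle is junk: division by 0 yields 0, contradicting alpha > 0. *)
  assert (Hv : 0 < nrm v).
  { destruct (Rle_lt_or_eq_dec 0 (nrm v) (nrm_ge0 v)) as [|E]; [assumption|].
    rewrite <- E, Rmult_0_r in H. unfold Rdiv in H. rewrite Rinv_0, Rmult_0_r in H.
    assert (0 < Rad / (Rad + d)) by (apply Rdiv_lt_0_compat; lra). lra. }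
  split; [exact Hv|].
  set (X := Rabs (cross p v)) in *.
  replace X with (X / ((Rad + d) * nrm v) * ((Rad + d) * nrm v)) by (field; lra).
  replace (Rad * nrm v) with (Rad / (Rad + d) * ((Rad + d) * nrm v)) by (field; lra).
  apply Rmult_lt_compat_r; [nra|exact H].
Qed.

Lemma flight_straight left Rad d p v tau :
  0 < Rad -> 0 < d -> 0 < tau ->
  on_arc left Rad d p -> on_arc left Rad d (padd p (pscal tau v)) ->
  Rad / (Rad + d) < abs_sin_phi p v ->
  flight left Rad d p v tau (padd p (pscal tau v)).
Proof.
  intros HR Hd Htau [Hp Hhp] [Hq Hhq] Hphi.
  destruct (transversal_of_abs_sin_phi Rad d p v HR Hd Hp Hphi) as [Hv Hcr].
  split; [exact Htau|]. left. split; [reflexivity|].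
  intros s Hs. split; [|split].
  - apply in_half_segment with tau; [exact Hhp|exact Hhq|lra].
  - apply segment_outside_disk. exact Hcr.
  - apply segment_inside_circle with tau; assumption.
Qed.

Definition polar (rho th : R) : pt := (rho * cos th, rho * sin th).

(* Angular parameter of the arcs: the left arc is th in [PI/2, 3PI/2],
   the right arc th in [-PI/2, PI/2]. *)
Definition arc_start (left : bool) : R := if left then PI / 2 else - (PI / 2).

Lemma sin2_cos2_pow x : sin x ^ 2 + cos x ^ 2 = 1.
Proof. pose proof (sin2_cos2 x). unfold Rsqr in H. lra. Qed.

Lemma nrm_polar rho th : 0 <= rho -> nrm (polar rho th) = rho.
Proof.
  intros H. unfold nrm, polar; cbn [fst snd].
  replace ((rho * cos th) ^ 2 + (rho * sin th) ^ 2) with (rho ^ 2 * (sin th ^ 2 + cos th ^ 2)) by ring.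
  rewrite sin2_cos2_pow, Rmult_1_r. apply sqrt_pow2. exact H.
Qed.

Lemma on_arc_polar left Rad d th :
  0 <= Rad + d -> arc_start left <= th <= arc_start left + PI ->
  on_arc left Rad d (polar (Rad + d) th).
Proof.
  intros Hrho Hth. split; [apply nrm_polar; exact Hrho|].
  unfold in_half, polar, arc_start in *; cbn [fst]; destruct left.
  - assert (cos th <= 0) by (apply cos_le_0; lra). nra.
  - assert (0 <= cos th) by (apply cos_ge_0; lra). nra.
Qed.

Lemma arc_polar left Rad d r :
  0 < Rad + d -> on_arc left Rad d r ->
  exists th, arc_start left <= th <= arc_start left + PI /\ r = polar (Rad + d) th.
Proof.
  intros Hrho [Hn Hh]. destruct r as [x y].
  set (rho := Rad + d) in *.
  pose proof (nrm_sq (x, y)) as Exy. rewrite Hn in Exy. cbn [fst snd] in Exy.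
  set (u := y / rho).
  assert (Hy : y = rho * u) by (unfold u; field; lra).
  assert (Hx2 : x ^ 2 = rho ^ 2 * (1 - u²)) by (unfold Rsqr; rewrite Hy in Exy; lra).
  assert (Hu : -1 <= u <= 1).
  { assert (0 <= rho ^ 2 * (1 - u²)) by (rewrite <- Hx2; apply pow2_ge_0).
    assert (0 <= 1 - u²) by (apply Rmult_le_reg_l with (rho ^ 2); [apply pow_lt|]; lra).
    unfold Rsqr in *. nra. }
  assert (Hs : sqrt (1 - u²) * rho = Rabs x).
  { rewrite <- (sqrt_pow2 rho), <- sqrt_mult_alt by (unfold Rsqr; nra).
    rewrite <- (sqrt_pow2 (Rabs x)), pow2_abs by apply Rabs_pos. f_equal. lra. }
  pose proof (asin_bound u).
  unfold in_half, arc_start in *; cbn [fst] in Hh; destruct left.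
  - exists (PI - asin u). split; [lra|]. unfold polar.
    rewrite Rtrigo_facts.cos_pi_minus, sin_PI_x, sin_asin, cos_asin by lra.
    rewrite Rabs_left1 in Hs by lra. f_equal; lra.
  - exists (asin u). split; [lra|]. unfold polar.
    rewrite sin_asin, cos_asin by lra.
    rewrite Rabs_right in Hs by lra. f_equal; lra.
Qed.

Lemma polar_chord_formulas rho a b :
  let x := (b - a) / 2 in let w := psub (polar rho b) (polar rho a) in
  fst w ^ 2 + snd w ^ 2 = (2 * rho * sin x) ^ 2 /\
  cross (polar rho a) w = 2 * rho ^ 2 * sin x * cos x.
Proof.
  intros x w. unfold w, psub, polar, cross; cbn [fst snd].
  replace b with (a + 2 * x) by (unfold x; field).
  rewrite cos_plus, sin_plus, sin_2a, cos_2a_sin.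
  pose proof (sin2_cos2_pow a) as Ea. pose proof (sin2_cos2_pow x) as Ex.
  split.
  - transitivity ((2 * rho * sin x) ^ 2 * ((sin a ^ 2 + cos a ^ 2) * (sin x ^ 2 + cos x ^ 2)));
      [ring|rewrite Ea, Ex; ring].
  - transitivity (2 * rho ^ 2 * sin x * cos x * (sin a ^ 2 + cos a ^ 2)); [ring|rewrite Ea; ring].
Qed.

Lemma nrm_polar_chord rho a b :
  0 <= rho -> nrm (psub (polar rho b) (polar rho a)) = 2 * rho * Rabs (sin ((b - a) / 2)).
Proof.
  intros Hrho. destruct (polar_chord_formulas rho a b) as [Hw _].
  unfold nrm. rewrite Hw, <- (pow2_abs (2 * rho * _)), sqrt_pow2 by apply Rabs_pos.
  rewrite !Rabs_mult, (Rabs_pos_eq 2), (Rabs_pos_eq rho) by lra. reflexivity.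
Qed.

Lemma abs_sin_phi_polar_chord rho a b :
  0 < rho -> sin ((b - a) / 2) <> 0 ->
  abs_sin_phi (polar rho a) (psub (polar rho b) (polar rho a)) = Rabs (cos ((b - a) / 2)).
Proof.
  intros Hrho Hs. destruct (polar_chord_formulas rho a b) as [_ Hc].
  unfold abs_sin_phi. fold (cross (polar rho a) (psub (polar rho b) (polar rho a))).
  rewrite Hc, nrm_polar_chord, nrm_polar by lra.
  rewrite !Rabs_mult, (Rabs_pos_eq 2), (Rabs_pos_eq (rho ^ 2)) by nra.
  field. split; [apply Rabs_no_R0; exact Hs|lra].
Qed.

Lemma chord_step left Rad d eps s a b :
  0 < Rad -> 0 < d -> 0 < eps -> 0 < s ->
  on_arc left Rad d (polar (Rad + d) a) -> on_arc left Rad d (polar (Rad + d) b) ->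
  Rad / (Rad + d) + eps <= cos ((b - a) / 2) <= 1 - eps ->
  let p := polar (Rad + d) a in
  let w := psub (polar (Rad + d) b) p in
  let v := pscal (s / nrm w) w in
  flight left Rad d p v (nrm w / s) (polar (Rad + d) b) /\ nrm v = s /\
  Rad / (Rad + d) + eps <= abs_sin_phi p v <= 1 - eps.
Proof.
  intros HR Hd He Hs Ha Hb Hcos p w v.
  assert (Hal : 0 < Rad / (Rad + d)) by (apply Rdiv_lt_0_compat; lra).
  assert (Hsin : sin ((b - a) / 2) <> 0).
  { intros E. pose proof (sin2_cos2_pow ((b - a) / 2)) as Ep. rewrite E in Ep. nra. }
  assert (Hw : 0 < nrm w).
  { unfold w, p. rewrite nrm_polar_chord by lra.
    pose proof (Rabs_pos_lt _ Hsin). nra. }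
  assert (Hv : nrm v = s).
  { unfold v. rewrite nrm_pscal by (apply Rlt_le, Rdiv_lt_0_compat; lra). field. lra. }
  assert (Hphi : abs_sin_phi p v = cos ((b - a) / 2)).
  { unfold v. rewrite abs_sin_phi_pscal by (apply Rdiv_lt_0_compat; lra).
    unfold w, p. rewrite abs_sin_phi_polar_chord by (assumption || lra).
    apply Rabs_pos_eq. lra. }
  assert (Hend : padd p (pscal (nrm w / s) v) = polar (Rad + d) b).
  { unfold v. set (N := nrm w) in *. unfold w, psub, padd, pscal; cbn [fst snd].
    destruct (polar (Rad + d) b) as [b1 b2]; cbn [fst snd]. f_equal; field; lra. }
  rewrite Hv, Hphi. split; [|split; [reflexivity|exact Hcos]].
  rewrite <- Hend. apply flight_straight; try lra.
  - apply Rdiv_lt_0_compat; lra.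
  - exact Ha.
  - rewrite Hend. exact Hb.
Qed.

Definition chord_len (rho : R) (th : nat -> R) (i : nat) : R :=
  nrm (psub (polar rho (th (S i))) (polar rho (th i))).

Lemma chord_len_bound rho th i : 0 <= rho -> 0 <= chord_len rho th i <= 2 * rho.
Proof.
  intros Hrho. unfold chord_len. rewrite nrm_polar_chord by exact Hrho.
  pose proof (Rabs_pos (sin ((th (S i) - th i) / 2))).
  assert (Rabs (sin ((th (S i) - th i) / 2)) <= 1) by (apply Rabs_le, SIN_bound).
  nra.
Qed.

Lemma total_time_div f s n :
  s <> 0 -> total_time (fun i => f i / s) n = total_time f n / s.
Proof. intros Hs. induction n as [|n IH]; simpl; [|rewrite IH]; field; exact Hs. Qed.

Lemma total_time_ext f g n :
  (forall i, (i < n)%nat -> f i = g i) -> total_time f n = total_time g n.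
Proof.
  induction n as [|n IH]; intros H; cbn [total_time]; [reflexivity|].
  rewrite IH, H; [reflexivity|lia|intros i Hi; apply H; lia].
Qed.

Lemma total_time_tail f n0 j c :
  (forall i, (n0 <= i)%nat -> f i = c) ->
  total_time f (n0 + j) = total_time f n0 + INR j * c.
Proof.
  intros H. induction j as [|j IH].
  - rewrite Nat.add_0_r. simpl. ring.
  - rewrite Nat.add_succ_r. cbn [total_time]. rewrite IH, H, S_INR by lia. ring.
Qed.

Lemma total_time_bound f n M :
  (forall i, (i < n)%nat -> 0 <= f i <= M) -> 0 <= total_time f n <= INR n * M.
Proof.
  induction n as [|n IH]; intros H; cbn [total_time]; [simpl; lra|].
  assert (0 <= total_time f n <= INR n * M) by (apply IH; intros; apply H; lia).
  assert (0 <= f n <= M) by (apply H; lia).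
  rewrite S_INR. lra.
Qed.

Lemma good_path_of_walk left Rad d smin smax eps T n th :
  0 < Rad -> 0 < d -> 0 < eps -> 0 < smin -> 0 < T ->
  (forall i, (i <= n)%nat -> arc_start left <= th i <= arc_start left + PI) ->
  (forall i, (i < n)%nat -> Rad / (Rad + d) + eps <= cos ((th (S i) - th i) / 2) <= 1 - eps) ->
  smin * T <= total_time (chord_len (Rad + d) th) n <= smax * T ->
  exists P V tau, good_path left Rad d smin smax (Rad / (Rad + d)) eps
                    (polar (Rad + d) (th O)) (polar (Rad + d) (th n)) T n P V tau.
Proof.
  intros HR Hd He Hsmin HT Hrange Hcos HL.
  set (L := total_time (chord_len (Rad + d) th) n) in *.
  set (s := L / T).
  assert (Hs : smin <= s <= smax).
  { unfold s. split; [apply Rmult_le_reg_r with T|apply Rmult_le_reg_r with T];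
      try (unfold Rdiv; rewrite Rmult_assoc, Rinv_l, Rmult_1_r); lra. }
  exists (fun i => polar (Rad + d) (th i)),
    (fun i => pscal (s / chord_len (Rad + d) th i)
                    (psub (polar (Rad + d) (th (S i))) (polar (Rad + d) (th i)))),
    (fun i => chord_len (Rad + d) th i / s).
  split; [reflexivity|split; [reflexivity|split; [|split]]].
  - intros i Hi. apply on_arc_polar; [lra|exact (Hrange i Hi)].
  - intros i Hi. unfold chord_len.
    destruct (chord_step left Rad d eps s (th i) (th (S i)) HR Hd He ltac:(lra)
                (on_arc_polar left Rad d _ ltac:(lra) (Hrange i ltac:(lia)))
                (on_arc_polar left Rad d _ ltac:(lra) (Hrange (S i) ltac:(lia)))
                (Hcos i Hi)) as (Hf & Hv & Hphi).
    split; [exact Hf|split; [rewrite Hv; exact Hs|exact Hphi]].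
  - assert (0 < L) by nra.
    rewrite total_time_div by (unfold s; apply Rgt_not_eq, Rdiv_lt_0_compat; lra).
    fold L. unfold s. field. split; lra.
Qed.

Lemma cos_half_between h1 h2 x :
  0 <= h1 <= Rabs x -> Rabs x <= h2 <= 2 * PI ->
  cos (h2 / 2) <= cos (x / 2) <= cos (h1 / 2).
Proof.
  intros H1 H2.
  assert (E : cos (x / 2) = cos (Rabs x / 2)).
  { destruct (Rle_or_lt 0 x).
    - rewrite Rabs_pos_eq by lra. reflexivity.
    - rewrite Rabs_left, <- cos_neg by lra. f_equal. field. }
  rewrite E. pose proof PI_RGT_0.
  split; apply cos_decr_1; lra.
Qed.

(* cos (x / 2) is |sin phi| for a chord spanning the angle x; h is chosen with
   cos (h / 2) = (1 + al) / 2. *)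
Lemma step_window al :
  0 < al < 1 ->
  exists h eps0, 0 < h <= PI /\ 0 < eps0 /\
  forall eps x, 0 < eps < eps0 -> h / 8 <= Rabs x <= h ->
  al + eps <= cos (x / 2) <= 1 - eps.
Proof.
  intros Hal. set (be := (1 + al) / 2).
  assert (Hbe : -1 <= be <= 1) by (unfold be; lra).
  assert (Hcos : cos (acos be) = be) by (apply cos_acos; exact Hbe).
  assert (Hac : 0 < acos be <= PI / 2).
  { destruct (acos_bound_lt be ltac:(unfold be; lra)) as [Hlo Hhi]. split; [exact Hlo|].
    destruct (Rle_or_lt (acos be) (PI / 2)) as [|Hgt]; [assumption|].
    assert (cos (acos be) < 0) by (apply cos_lt_0; lra). unfold be in *; lra. }
  set (h := 2 * acos be).
  assert (Hh : 0 < h <= PI) by (unfold h; lra).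
  assert (Hc16 : cos (h / 16) < 1).
  { rewrite <- cos_0. apply cos_decreasing_1; lra. }
  exists h, (Rmin (be - al) (1 - cos (h / 16))).
  split; [exact Hh|split; [apply Rmin_glb_lt; unfold be in *; lra|]].
  intros eps x [He He0] Hx.
  pose proof (Rmin_l (be - al) (1 - cos (h / 16))).
  pose proof (Rmin_r (be - al) (1 - cos (h / 16))).
  destruct (cos_half_between (h / 8) h x ltac:(lra) ltac:(lra)) as [Hlo Hhi].
  replace (h / 2) with (acos be) in Hlo by (unfold h; field).
  replace (h / 8 / 2) with (h / 16) in Hhi by field.
  lra.
Qed.

Definition nat_up (x : R) : nat := Z.to_nat (up x).

Lemma nat_up_spec x : 0 <= x -> x < INR (nat_up x) <= x + 1.
Proof.
  intros H. destruct (archimed x) as [H1 H2].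
  assert (Hp : (0 <= up x)%Z) by (apply le_IZR; lra).
  unfold nat_up. rewrite INR_IZR_INZ, Z2Nat.id by exact Hp. lra.
Qed.

Lemma nat_up_le x y : x <= y -> (nat_up x <= nat_up y)%nat.
Proof.
  intros H. destruct (archimed x) as [Hx1 Hx2]. destruct (archimed y) as [Hy1 Hy2].
  assert (Hup : (up x <= up y)%Z).
  { destruct (Z_le_gt_dec (up x) (up y)) as [|Hg]; [assumption|].
    assert (Hg' : (up y <= up x - 1)%Z) by lia.
    apply IZR_le in Hg'. rewrite minus_IZR in Hg'. lra. }
  unfold nat_up. lia.
Qed.

Definition angle_walk (lo hi h : R) (n : nat) (th : nat -> R) : Prop :=
  (forall i, (i <= n)%nat -> lo <= th i <= hi) /\
  (forall i, (i < n)%nat -> h / 8 <= Rabs (th (S i) - th i) <= h).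

Lemma exists_partner lo hi h b :
  0 <= h <= hi - lo -> lo <= b <= hi ->
  exists q, lo <= q <= hi /\ Rabs (q - b) = h / 2.
Proof.
  intros Hh Hb. destruct (Rle_or_lt b ((lo + hi) / 2)).
  - exists (b + h / 2). replace (b + h / 2 - b) with (h / 2) by ring.
    rewrite Rabs_pos_eq; lra.
  - exists (b - h / 2). replace (b - h / 2 - b) with (- (h / 2)) by ring.
    rewrite Rabs_Ropp, Rabs_pos_eq; lra.
Qed.

(* Equal steps of size |b - a| / k with k = nat_up (|b - a| / h); they are at least
   h / 5 because |b - a| >= h / 4. *)
Lemma angle_walk_linear lo hi h a b :
  0 < h -> lo <= a <= hi -> lo <= b <= hi -> h / 4 <= Rabs (b - a) ->
  exists n th, (n <= nat_up ((hi - lo) / h))%nat /\ th O = a /\ th n = b /\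
               angle_walk lo hi h n th.
Proof.
  intros Hh Ha Hb Hbig. set (D := b - a) in *.
  assert (HD : 0 <= Rabs D / h) by (apply Rle_mult_inv_pos; [apply Rabs_pos|lra]).
  set (k := nat_up (Rabs D / h)).
  destruct (nat_up_spec _ HD) as [Hk1 Hk2]. fold k in Hk1, Hk2.
  apply (Rmult_lt_compat_l h) in Hk1; [|lra].
  apply (Rmult_le_compat_l h) in Hk2; [|lra].
  replace (h * (Rabs D / h)) with (Rabs D) in Hk1 by (field; lra).
  replace (h * (Rabs D / h + 1)) with (Rabs D + h) in Hk2 by (field; lra).
  assert (Hk0 : 0 < INR k) by nra.
  exists k, (fun i => a + INR i * (D / INR k)).
  split; [|split; [|split; [|split]]].
  - apply nat_up_le. apply Rmult_le_compat_r; [apply Rlt_le, Rinv_0_lt_compat; lra|].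
    unfold D. apply Rabs_le. lra.
  - simpl. ring.
  - unfold D. field. lra.
  - intros i Hi. apply le_INR in Hi.
    assert (Ht : 0 <= INR i / INR k <= 1).
    { split; [apply Rle_mult_inv_pos; [apply pos_INR|lra]|].
      apply Rmult_le_reg_r with (INR k); [lra|]. field_simplify; lra. }
    replace (a + INR i * (D / INR k)) with ((1 - INR i / INR k) * a + (INR i / INR k) * b)
      by (unfold D; field; lra).
    split; nra.
  - intros i _. rewrite S_INR.
    replace (a + (INR i + 1) * (D / INR k) - (a + INR i * (D / INR k))) with (D / INR k) by ring.
    unfold Rdiv. rewrite Rabs_mult, Rabs_inv, (Rabs_pos_eq (INR k)) by lra.
    replace (Rabs D * / INR k) with (Rabs D / INR k) by reflexivity.
    split; apply Rmult_le_reg_r with (INR k); try lra;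
      replace (Rabs D / INR k * INR k) with (Rabs D) by (field; lra); lra.
Qed.

(* For nearby endpoints, a detour through a point at angular distance h/2. *)
Lemma angle_walk_detour lo hi h a b :
  0 < h <= hi - lo -> lo <= a <= hi -> lo <= b <= hi -> Rabs (b - a) < h / 4 ->
  exists th, th O = a /\ th 2%nat = b /\ angle_walk lo hi h 2 th.
Proof.
  intros Hh Ha Hb Hsmall.
  destruct (exists_partner lo hi h a ltac:(lra) Ha) as [q [Hq Hqa]].
  exists (fun i => match i with O => a | 1%nat => q | _ => b end).
  split; [reflexivity|split; [reflexivity|split]].
  - intros [|[|i]] _; simpl; lra.
  - intros [|[|i]] Hi; simpl; [lra| |lia].
    pose proof (Rabs_triang (b - a) (a - q)) as T1.
    pose proof (Rabs_triang (q - b) (b - a)) as T2.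
    replace (b - a + (a - q)) with (b - q) in T1 by ring.
    replace (q - b + (b - a)) with (q - a) in T2 by ring.
    rewrite (Rabs_minus_sym a q) in T1. rewrite (Rabs_minus_sym q b) in T2. lra.
Qed.

Lemma angle_walk_reach lo hi h a b :
  0 < h <= hi - lo -> lo <= a <= hi -> lo <= b <= hi ->
  exists n th, (n <= nat_up ((hi - lo) / h) + 2)%nat /\ th O = a /\ th n = b /\
               angle_walk lo hi h n th.
Proof.
  intros Hh Ha Hb. destruct (Rle_or_lt (h / 4) (Rabs (b - a))).
  - destruct (angle_walk_linear lo hi h a b) as (n & th & Hn & Hth); try lra.
    exists n, th. split; [lia|exact Hth].
  - destruct (angle_walk_detour lo hi h a b) as (th & Hth); try lra.
    exists 2%nat, th. split; [lia|exact Hth].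
Qed.

Definition pad_walk (th : nat -> R) (n0 : nat) (q : R) (i : nat) : R :=
  if (i <=? n0)%nat then th i else if Nat.even (i - n0) then th n0 else q.

Lemma pad_walk_head th n0 q i : (i <= n0)%nat -> pad_walk th n0 q i = th i.
Proof. intros Hi. unfold pad_walk. destruct (Nat.leb_spec i n0); [reflexivity|lia]. Qed.

Lemma pad_walk_tail th n0 q i :
  (n0 <= i)%nat -> pad_walk th n0 q i = if Nat.even (i - n0) then th n0 else q.
Proof.
  intros Hi. unfold pad_walk. destruct (Nat.leb_spec i n0); [|reflexivity].
  replace i with n0 by lia. rewrite Nat.sub_diag. reflexivity.
Qed.

Lemma pad_walk_step th n0 q i :
  (n0 <= i)%nat ->
  Rabs (pad_walk th n0 q (S i) - pad_walk th n0 q i) = Rabs (q - th n0).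
Proof.
  intros Hi. rewrite !pad_walk_tail by lia.
  replace (S i - n0)%nat with (S (i - n0)) by lia. rewrite Nat.even_succ, <- Nat.negb_even.
  destruct (Nat.even (i - n0)); simpl; [reflexivity|apply Rabs_minus_sym].
Qed.

Lemma angle_walk_pad lo hi h n0 th q m :
  angle_walk lo hi h n0 th -> lo <= q <= hi -> Rabs (q - th n0) = h / 2 -> 0 < h ->
  angle_walk lo hi h (n0 + m) (pad_walk th n0 q).
Proof.
  intros [Hrange Hstep] Hq Hqb Hh. split.
  - intros i _. destruct (Nat.le_gt_cases i n0).
    + rewrite pad_walk_head by assumption. apply Hrange. assumption.
    + rewrite pad_walk_tail by lia. destruct (Nat.even (i - n0)); [apply Hrange; lia|exact Hq].
  - intros i _. destruct (Nat.lt_ge_cases i n0).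
    + rewrite !pad_walk_head by lia. apply Hstep. assumption.
    + rewrite pad_walk_step by assumption. lra.
Qed.

Lemma angle_walk_padded lo hi h rho n0 th0 m :
  0 < h <= hi - lo -> 0 <= rho -> angle_walk lo hi h n0 th0 ->
  exists th, th O = th0 O /\ th (n0 + 2 * m)%nat = th0 n0 /\
    angle_walk lo hi h (n0 + 2 * m) th /\
    total_time (chord_len rho th) (n0 + 2 * m) =
      total_time (chord_len rho th0) n0 + 2 * INR m * (2 * rho * Rabs (sin (h / 4))).
Proof.
  intros Hh Hrho Hw.
  assert (Hend : lo <= th0 n0 <= hi) by (apply (proj1 Hw); lia).
  destruct (exists_partner lo hi h (th0 n0) ltac:(lra) Hend) as [q [Hq Hqb]].
  exists (pad_walk th0 n0 q).
  split; [apply pad_walk_head; lia|split; [|split]].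
  - rewrite pad_walk_tail by lia. replace (n0 + 2 * m - n0)%nat with (2 * m)%nat by lia.
    rewrite Nat.even_mul. reflexivity.
  - apply angle_walk_pad; lra || assumption.
  - rewrite (total_time_tail _ n0 (2 * m) (2 * rho * Rabs (sin (h / 4)))).
    + rewrite (total_time_ext (chord_len rho (pad_walk th0 n0 q)) (chord_len rho th0) n0).
      * rewrite mult_INR. simpl INR. ring.
      * intros i Hi. unfold chord_len. rewrite !pad_walk_head by lia. reflexivity.
    + intros i Hi. unfold chord_len. rewrite nrm_polar_chord by assumption.
      pose proof (pad_walk_step th0 n0 q i Hi) as Hs. rewrite Hqb in Hs.
      f_equal.
      destruct (Rle_or_lt 0 (pad_walk th0 n0 q (S i) - pad_walk th0 n0 q i)).
      * rewrite Rabs_pos_eq in Hs by assumption. rewrite Hs. do 2 f_equal. field.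
      * rewrite Rabs_left in Hs by assumption.
        replace ((pad_walk th0 n0 q (S i) - pad_walk th0 n0 q i) / 2) with (- (h / 4)) by lra.
        rewrite sin_neg. apply Rabs_Ropp.
Qed.

Lemma padding_count smin smax c T L0 :
  0 < c -> 0 <= L0 <= smin * T -> 2 * c <= (smax - smin) * T ->
  exists m, (m <= nat_up (smin * T / (2 * c)))%nat /\
            smin * T <= L0 + 2 * INR m * c <= smax * T.
Proof.
  intros Hc HL Hgap.
  set (arg := (smin * T - L0) / (2 * c)).
  assert (Harg : 0 <= arg) by (apply Rle_mult_inv_pos; lra).
  assert (E : 2 * c * arg = smin * T - L0) by (unfold arg; field; lra).
  destruct (nat_up_spec arg Harg) as [Hm1 Hm2].
  exists (nat_up arg). split; [|split; nra].
  apply nat_up_le. apply Rmult_le_compat_r; [apply Rlt_le, Rinv_0_lt_compat|]; lra.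
Qed.

Lemma angle_walk_of_length lo hi h rho smin smax T a b :
  0 < h <= hi - lo -> 0 < rho -> lo <= a <= hi -> lo <= b <= hi ->
  let K := (nat_up ((hi - lo) / h) + 2)%nat in
  let c := 2 * rho * Rabs (sin (h / 4)) in
  0 < c -> 2 * rho * INR K <= smin * T -> 2 * c <= (smax - smin) * T ->
  exists n th, (n <= K + 2 * nat_up (smin * T / (2 * c)))%nat /\ th O = a /\ th n = b /\
    angle_walk lo hi h n th /\ smin * T <= total_time (chord_len rho th) n <= smax * T.
Proof.
  intros Hh Hrho Ha Hb K c Hc HKT HcT.
  destruct (angle_walk_reach lo hi h a b Hh Ha Hb) as (n0 & th0 & Hn0 & Ha0 & Hb0 & Hw0).
  fold K in Hn0.
  set (L0 := total_time (chord_len rho th0) n0).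
  assert (HL0 : 0 <= L0 <= INR n0 * (2 * rho)).
  { apply total_time_bound. intros i _. apply chord_len_bound. lra. }
  assert (INR n0 * (2 * rho) <= 2 * rho * INR K) by (apply le_INR in Hn0; nra).
  destruct (padding_count smin smax c T L0 Hc ltac:(nra) HcT) as (m & Hm & HL).
  destruct (angle_walk_padded lo hi h rho n0 th0 m Hh ltac:(lra) Hw0)
    as (th & Hth0 & Hthn & Hw & Hlen).
  exists (n0 + 2 * m)%nat, th.
  split; [lia|].
  split; [congruence|split; [congruence|split; [exact Hw|]]].
  rewrite Hlen. exact HL.
Qed.

Lemma le_mul_of_div_le x k T : 0 < k -> x / k <= T -> x <= k * T.
Proof.
  intros Hk H. replace x with (k * (x / k)) by (field; lra).
  apply Rmult_le_compat_l; lra.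
Qed.

Theorem lemma3 (Rad d smin smax : R) :
  0 < Rad -> 0 < d -> 0 < smin -> smin < smax ->
  exists eps0, 0 < eps0 /\
  forall eps, 0 < eps < eps0 ->
  let alpha := Rad / (Rad + d) in
  exists Tstar, 0 < Tstar /\
  exists N : R -> nat, (forall x y, x <= y -> (N x <= N y)%nat) /\
  forall Tt, Tstar <= Tt ->
  forall (left : bool) (r r' : pt),
    on_arc left Rad d r -> on_arc left Rad d r' ->
    exists (n : nat) (P V : nat -> pt) (tau : nat -> R),
      good_path left Rad d smin smax alpha eps r r' Tt n P V tau /\
      (n <= N Tt)%nat.
Proof.
  intros HR Hd Hsmin Hss.
  set (rho := Rad + d).
  assert (Hrho : 0 < rho) by (unfold rho; lra).
  assert (Hal : 0 < Rad / rho < 1).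
  { split; [apply Rdiv_lt_0_compat; lra|].
    apply Rmult_lt_reg_r with rho; [lra|]. unfold Rdiv. rewrite Rmult_assoc, Rinv_l by lra.
    unfold rho. lra. }
  destruct (step_window _ Hal) as (h & eps0 & Hh & He0 & Hwin).
  exists eps0. split; [exact He0|]. intros eps Heps. cbv zeta.
  set (K := (nat_up (PI / h) + 2)%nat).
  set (c := 2 * rho * Rabs (sin (h / 4))).
  assert (Hc : 0 < c).
  { assert (0 < sin (h / 4)) by (apply sin_gt_0; lra).
    unfold c. rewrite Rabs_pos_eq by lra. nra. }
  assert (HK : 0 <= 2 * rho * INR K / smin).
  { apply Rle_mult_inv_pos; [|lra]. pose proof (pos_INR K). nra. }
  assert (Hcs : 0 < 2 * c / (smax - smin)) by (apply Rdiv_lt_0_compat; lra).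
  exists (2 * rho * INR K / smin + 2 * c / (smax - smin)). split; [lra|].
  exists (fun x => (K + 2 * nat_up (smin * x / (2 * c)))%nat). split.
  { intros x y Hxy. enough (nat_up (smin * x / (2 * c)) <= nat_up (smin * y / (2 * c)))%nat by lia.
    apply nat_up_le, Rmult_le_compat_r; [apply Rlt_le, Rinv_0_lt_compat|]; nra. }
  intros T HT left r r' Hr Hr'.
  destruct (arc_polar left Rad d r ltac:(lra) Hr) as (a & Ha & ->).
  destruct (arc_polar left Rad d r' ltac:(lra) Hr') as (b & Hb & ->).
  set (lo := arc_start left) in *.
  assert (HKT : 2 * rho * INR K <= smin * T) by (apply le_mul_of_div_le; lra).
  assert (HcT : 2 * c <= (smax - smin) * T) by (apply le_mul_of_div_le; lra).
  destruct (angle_walk_of_length lo (lo + PI) h rho smin smax T a b)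
    as (n & th & Hn & Ha0 & Hb0 & [Hrange Hstep] & HL);
    replace (lo + PI - lo) with PI by ring; try lra; [exact Hc|exact HKT|exact HcT|].
  destruct (good_path_of_walk left Rad d smin smax eps T n th HR Hd ltac:(lra) Hsmin
              ltac:(lra) Hrange) as (P & V & tau & Hgood).
  - intros i Hi. apply Hwin; [exact Heps|exact (Hstep i Hi)].
  - exact HL.
  - exists n, P, V, tau. rewrite Ha0, Hb0 in Hgood. split; [exact Hgood|].
    replace (lo + PI - lo) with PI in Hn by ring. exact Hn.
Qed.
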